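(* Let $m_1\le m_2\le\dots\le m_k$ be nonnegative integers, $n=\sum_r m_r$, and let $T_1,\dots,T_n\in\{H,L\}$ with $0\le H<L$. Let $q^{(t)}_r$ ($1\le r\le k$, $1\le t\le n+1$) be the capacity variables computed by Algorithm 1 on this input. Then for every $1\le t\le n$ and every $1\le r<s\le k$ we have $q^{(t)}_r\le q^{(t)}_s$.
   Context: Algorithm 1 (simulation-based threshold algorithm). Input: integers $0\le m_1\le\dots\le m_k$ and a sequence $T_1,\dots,T_n$ with $n=\sum_r m_r$. Set $q^{(1)}_r=m_r$ for all $r$. For $t=1,\dots,n$: set $x_t=\mathrm{TA}(q^{(t)}_1,\dots,q^{(t)}_k;\,T_t,T_{t+1},\dots,T_n)$ and $q^{(t+1)}_r=q^{(t)}_r-\mathbf{1}(x_t=r)$ for each $r$. Output $\mathbf{x}=(x_1,\dots,x_n)$. Subroutine $\mathrm{TA}(m_1,\dots,m_k;\,S_1,\dots,S_N)$ (ThresholdAllocation), with the convention $m_0:=0$: for $\gamma=k,k-1,\dots,1$: if $m_\gamma=m_{\gamma-1}$, go to the next $\gamma$; otherwise, for $h=\gamma,\gamma+1,\dots,k$: let $Z_L=\sum_{i=1}^{h-1}\min\{m_i,m_{\gamma-1}\}$ and $Z_H=\sum_{i=\gamma}^{h}(m_i-m_{\gamma-1})$; if $|\{i\in\{1,\dots,Z_L+Z_H\}: S_i>S_1\}|\ge Z_L$, return $\gamma$ (agent to which $S_1$ is assigned). *)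

From HB Require Import structures.
From mathcomp Require Import all_boot all_order all_algebra.
Set Implicit Arguments. Unset Strict Implicit. Unset Printing Implicit Defensive.
Import Order.TTheory GRing.Theory Num.Theory.

(* Capacities are functions m : nat -> nat, used on indices 1..k;
   convention m_0 := 0 is implemented by [m0]. *)
Definition m0 (m : nat -> nat) (i : nat) : nat := if i == 0 then 0 else m i.

Section TA.
Variable R : realDomainType.

Definition TA_test (m : nat -> nat) (S : seq R) (g h : nat) : bool :=
  let mg := m0 m g.-1 in
  let ZL := (\sum_(1 <= i < h) minn (m i) mg)%N in
  let ZH := (\sum_(g <= i < h.+1) (m i - mg))%N in
  (ZL <= count (fun x : R => (head 0%R S < x)%R) (take (ZL + ZH) S))%N.

(* ThresholdAllocation(m_1..m_k; S_1..S_N): scan gamma = k, k-1, ..., 1;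
   skip gamma if m_gamma = m_{gamma-1}; otherwise scan h = gamma..k and return
   gamma at the first h passing the test.  Returns 0 if no gamma is returned. *)
Definition TA (k : nat) (m : nat -> nat) (S : seq R) : nat :=
  head 0%N [seq g <- rev (iota 1 k) |
             (m0 m g != m0 m g.-1) && has (TA_test m S g) (iota g (k.+1 - g))].

(* qstate k m T t = q^{(t+1)} of Algorithm 1, i.e. after t steps. *)
Fixpoint qstate (k : nat) (m : nat -> nat) (T : seq R) (t : nat) : nat -> nat :=
  match t with
  | 0 => m
  | t'.+1 =>
      let q := qstate k m T t' in
      let x := TA k q (drop t' T) in
      fun r => (q r - (x == r))%N
  end.

Definition q_alg (k : nat) (m : nat -> nat) (T : seq R) (t r : nat) : nat :=
  qstate k m T t.-1 r.
End TA.

From HB Require Import structures.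
From mathcomp Require Import all_boot all_order all_algebra.
From mathcomp Require Import zify.
Import Order.TTheory GRing.Theory Num.Theory.

(* ThresholdAllocation only ever returns an agent [g] with [m_g <> m_(g-1)];
   for sorted capacities this is a strict jump [m_(g-1) < m_g], so removing one
   unit of capacity from [g] keeps the capacities sorted.  Sortedness is thus an
   invariant of Algorithm 1, whatever the thresholds [T_t] are. *)

Definition nondecreasing_on (k : nat) (q : nat -> nat) :=
  forall r, (0 < r < k)%N -> (q r <= q r.+1)%N.

Lemma nondecreasing_on_leq {k q r s} :
  nondecreasing_on k q -> (0 < r)%N -> (r <= s <= k)%N -> (q r <= q s)%N.
Proof.
move=> q_incr r_gt0 /andP[le_rs le_sk].
pose D := [pred i | 0 < i <= k]%N.
apply: (homo_leq_in (D := D) (f := q) (r := leq) leqnn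
         (fun _ _ _ => @leq_trans _ _ _)) => //=.
- by move=> i j iD jD x; rewrite !inE in iD jD *; lia.
- by move=> i iD iSD; rewrite !inE in iD iSD; apply: q_incr; lia.
- by rewrite inE; lia.
- by rewrite inE; lia.
Qed.

Lemma nondecreasing_on_subn_jump k q x :
  nondecreasing_on k q -> ((1 < x <= k)%N -> (q x.-1 < q x)%N) ->
  nondecreasing_on k (fun r => q r - (x == r))%N.
Proof.
move=> q_incr jump_x r r_range /=; have := q_incr r r_range.
case: (eqVneq x r.+1) => [x_eq | _]; last by case: (x == r); lia.
have : (q r < q r.+1)%N by move: jump_x; rewrite x_eq; apply; lia.
rewrite x_eq (gtn_eqF (ltnSn r)); lia.
Qed.

Lemma TA_cases {R : realDomainType} k (q : nat -> nat) (S : seq R) :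
  TA k q S = 0%N \/
  [/\ (0 < TA k q S <= k)%N & m0 q (TA k q S) != m0 q (TA k q S).-1].
Proof.
rewrite /TA; set P := (fun g => _ && _).
case E: [seq g <- rev (iota 1 k) | P g] => [|g l] /=; [by left | right].
have : g \in [seq g <- rev (iota 1 k) | P g] by rewrite E mem_head.
rewrite mem_filter mem_rev mem_iota => /andP[/andP[jump_g _] g_range].
by split=> //; apply/andP; lia.
Qed.

Lemma TA_jump {R : realDomainType} k q (S : seq R) :
  nondecreasing_on k q -> (1 < TA k q S <= k)%N ->
  (q (TA k q S).-1 < q (TA k q S))%N.
Proof.
move=> q_incr; case: (TA_cases k q S) => [-> // | [_]].
move: (TA k q S) => g + g_range; rewrite /m0 !ifN; try lia.
have := q_incr g.-1; rewrite prednK; lia.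
Qed.

Lemma nondecreasing_qstate {R : realDomainType} k m (T : seq R) t :
  nondecreasing_on k m -> nondecreasing_on k (qstate k m T t).
Proof.
move=> m_incr; elim: t => [|t IH] //=.
exact/nondecreasing_on_subn_jump/TA_jump.
Qed.

Theorem lemma3 (R : realDomainType) (k : nat) (m : nat -> nat) (H L : R)
    (T : seq R) :
  (forall r, (1 <= r)%N -> (r < k)%N -> (m r <= m r.+1)%N) ->
  size T = (\sum_(1 <= r < k.+1) m r)%N ->
  (0 <= H)%R -> (H < L)%R ->
  all (fun x => (x == H) || (x == L)) T ->
  forall t r s, (1 <= t)%N -> (t <= size T)%N ->
    (1 <= r)%N -> (r < s)%N -> (s <= k)%N ->
    (q_alg k m T t r <= q_alg k m T t s)%N.
Proof.
move=> m_incr _ _ _ _ t r s _ _ r_gt0 lt_rs le_sk.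
have m_sorted : nondecreasing_on k m by move=> i /andP[]; exact: m_incr.
have q_sorted := nondecreasing_qstate k m T t.-1 m_sorted.
rewrite /q_alg; apply: (nondecreasing_on_leq q_sorted r_gt0).
by rewrite (ltnW lt_rs).
Qed.
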